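(* Let $A$ be a real symmetric matrix of tropical rank two. Then the symmetric tropical rank of $A$ is greater than two if and only if some principal $3\times 3$ submatrix of $A$ is not symmetrically tropically singular.
   Context: For an $r\times r$ submatrix of a real matrix $A$ with row index set $I$ and column index set $J$, each bijection $\rho:I\to J$ has value $\sum_{i\in I}A_{i,\rho(i)}$; the submatrix is tropically singular if the minimum value is attained by at least two distinct bijections. For symmetric $A$, the submatrix is symmetrically tropically singular if the minimum is attained by at least two distinct monomials $\prod_{i\in I}X_{i,\rho(i)}$, where variables are subject to the identification $X_{i,j}=X_{j,i}$. The tropical rank (resp. symmetric tropical rank) of $A$ is the largest $r$ such that $A$ has an $r\times r$ submatrix (arbitrary row and column sets) that is not tropically singular (resp. not symmetrically tropically singular). A principal submatrix is one with equal row and column index sets. *)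

From HB Require Import structures.
From mathcomp Require Import all_boot all_order all_algebra all_fingroup.
Set Implicit Arguments. Unset Strict Implicit. Unset Printing Implicit Defensive.
Import Order.TTheory GRing.Theory Num.Theory.
Local Open Scope ring_scope.

Section Trop.
Variables (R : realFieldType) (n : nat) (A : 'M[R]_n).

(* An r x r submatrix is given by injective row/column enumerations
   f g : 'I_r -> 'I_n.  Bijections rho : I -> J correspond exactly to
   permutations s : 'S_r via rho (f i) = g (s i). *)
Definition bij_val r (f g : 'I_r -> 'I_n) (s : 'S_r) : R :=
  \sum_(i < r) A (f i) (g (s i)).

Definition bij_is_min r (f g : 'I_r -> 'I_n) (s : 'S_r) : bool :=
  [forall s' : 'S_r, bij_val f g s <= bij_val f g s'].

Definition trop_singular r (f g : 'I_r -> 'I_n) : bool :=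
  [exists s1 : 'S_r, exists s2 : 'S_r,
     [&& s1 != s2, bij_is_min f g s1 & bij_is_min f g s2]].

(* unordered pair {a,b} encoded as (min, max) *)
Definition upair (a b : 'I_n) : 'I_n * 'I_n :=
  if (a <= b)%N then (a, b) else (b, a).

(* the monomial prod_i X_{f i, g (s i)} with X_{a,b} = X_{b,a}:
   exponent of each unordered variable *)
Definition bij_monomial r (f g : 'I_r -> 'I_n) (s : 'S_r)
  : {ffun 'I_n * 'I_n -> nat} :=
  [ffun p => #|[set i : 'I_r | upair (f i) (g (s i)) == p]|].

Definition sym_trop_singular r (f g : 'I_r -> 'I_n) : bool :=
  [exists s1 : 'S_r, exists s2 : 'S_r,
     [&& bij_monomial f g s1 != bij_monomial f g s2,
         bij_is_min f g s1 & bij_is_min f g s2]].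

Definition has_nonsingular r : bool :=
  [exists f : {ffun 'I_r -> 'I_n}, exists g : {ffun 'I_r -> 'I_n},
     [&& injectiveb f, injectiveb g & ~~ trop_singular f g]].

Definition has_sym_nonsingular r : bool :=
  [exists f : {ffun 'I_r -> 'I_n}, exists g : {ffun 'I_r -> 'I_n},
     [&& injectiveb f, injectiveb g & ~~ sym_trop_singular f g]].

Definition trop_rank : nat := \max_(r < n.+1 | has_nonsingular r) r.
Definition sym_trop_rank : nat := \max_(r < n.+1 | has_sym_nonsingular r) r.

End Trop.

From HB Require Import structures.
From mathcomp Require Import all_boot all_order all_algebra all_fingroup.
Set Implicit Arguments. Unset Strict Implicit. Unset Printing Implicit Defensive.
Import Order.TTheory GRing.Theory Num.Theory.
Local Open Scope ring_scope.

(** Take an r x r submatrix (r >= 3) that is not symmetrically tropically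
    singular and a minimizing bijection rho of it.  Keeping three of its rows
    together with the columns rho assigns to them gives a 3 x 3 submatrix; each
    of its minimizing bijections extends by rho to a minimizing bijection of the
    big one, so all its minimizing bijections give the same monomial.  As the
    tropical rank is two, it has two distinct minimizing bijections s1, s2, and
    equality of their monomials forces the column set to equal the row set: the
    entry (i, s1 i) must reappear transposed in s2, which puts three distinct
    columns into the row set.  So the 3 x 3 submatrix is a principal submatrix
    with permuted columns, and it is not symmetrically tropically singular. *)

Lemma bigmax_gtnP (I : finType) (P : pred I) (F : I -> nat) (k : nat) :
  (k < \max_(i | P i) F i)%N -> exists2 i, P i & (k < F i)%N.
Proof.
move=> lt_k_max; apply/exists_inP; apply: contraTT lt_k_max.
rewrite negb_exists_in -leqNgt => /forall_inP le_F_k.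
by apply/bigmax_leqP => i Pi; rewrite leqNgt le_F_k.
Qed.

Lemma leq_bigmax_ord (N r : nat) (P : pred nat) :
  (r < N)%N -> P r -> (r <= \max_(i < N | P i) i)%N.
Proof. by move=> lt_rN Pr; apply: (leq_bigmax_cond (Ordinal lt_rN)). Qed.

Lemma injective_ord_leq (r n : nat) (f : 'I_r -> 'I_n) :
  injective f -> (r <= n)%N.
Proof. by move/leq_card; rewrite !card_ord. Qed.

Section TropicalRanks.
Variables (R : realFieldType) (n : nat) (A : 'M[R]_n).

Lemma has_nonsingular_leq_trop_rank r :
  has_nonsingular A r -> (r <= trop_rank A)%N.
Proof.
move=> hr; case/existsP: (hr) => f /existsP[g /and3P[/injectiveP f_inj _ _]].
by apply: leq_bigmax_ord hr; rewrite ltnS (injective_ord_leq f_inj).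
Qed.

Lemma has_sym_nonsingular_leq_sym_trop_rank r :
  has_sym_nonsingular A r -> (r <= sym_trop_rank A)%N.
Proof.
move=> hr; case/existsP: (hr) => f /existsP[g /and3P[/injectiveP f_inj _ _]].
by apply: leq_bigmax_ord hr; rewrite ltnS (injective_ord_leq f_inj).
Qed.

Lemma sym_trop_rank_gtnP k :
  (k < sym_trop_rank A)%N -> exists2 r, has_sym_nonsingular A r & (k < r)%N.
Proof. by case/bigmax_gtnP => r; exists r. Qed.

End TropicalRanks.

Section Submatrices.
Variables (R : realFieldType) (n : nat) (A : 'M[R]_n).

Lemma bij_is_min_exists r (f g : 'I_r -> 'I_n) : exists s, bij_is_min A f g s.
Proof.
have [s _ s_min] := arg_minP (bij_val A f g) (i0 := 1%g) (P := predT) isT.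
by exists s; apply/forallP => t; apply: s_min.
Qed.

Lemma sym_nonsingular_monomial_eq r (f g : 'I_r -> 'I_n) (s1 s2 : 'S_r) :
  ~~ sym_trop_singular A f g -> bij_is_min A f g s1 -> bij_is_min A f g s2 ->
  bij_monomial f g s1 = bij_monomial f g s2.
Proof.
move=> nsing min1 min2; apply/eqP; apply: contraNT nsing => neq.
by apply/existsP; exists s1; apply/existsP; exists s2; rewrite neq min1 min2.
Qed.

Section ColumnReindexing.
Variables (r : nat) (f g g' : 'I_r -> 'I_n) (P : 'S_r).
Hypothesis gE : g =1 g' \o P.

Lemma bij_val_reindex s : bij_val A f g s = bij_val A f g' (s * P).
Proof. by apply: eq_bigr => i _; rewrite permM gE. Qed.

Lemma bij_monomial_reindex s : bij_monomial f g s = bij_monomial f g' (s * P).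
Proof.
by apply/ffunP => p; rewrite !ffunE; apply: eq_card => i; rewrite !inE permM gE.
Qed.

Lemma bij_is_min_reindex s : bij_is_min A f g s = bij_is_min A f g' (s * P).
Proof.
apply/forallP/forallP => s_min t; last by rewrite !bij_val_reindex.
by have := s_min (t * P^-1)%g; rewrite !bij_val_reindex mulgKV.
Qed.

Lemma sym_trop_singular_reindex :
  sym_trop_singular A f g = sym_trop_singular A f g'.
Proof.
apply/existsP/existsP => -[s1 /existsP[s2 /and3P[neq min1 min2]]].
  exists (s1 * P)%g; apply/existsP; exists (s2 * P)%g.
  by rewrite -!bij_monomial_reindex -!bij_is_min_reindex neq min1 min2.
exists (s1 * P^-1)%g; apply/existsP; exists (s2 * P^-1)%g.
by rewrite !bij_monomial_reindex !bij_is_min_reindex !mulgKV neq min1 min2.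
Qed.

End ColumnReindexing.

Lemma reindex_columns_of_rows r (f g : 'I_r -> 'I_n) :
  injective f -> injective g -> (forall j, g j \in codom f) ->
  exists P : 'S_r, g =1 f \o P.
Proof.
move=> f_inj g_inj g_in_f; pose pi j := iinv (g_in_f j).
have piE j : f (pi j) = g j by rewrite f_iinv.
have pi_inj : injective pi by move=> x y eq_pi; apply: g_inj; rewrite -!piE eq_pi.
by exists (perm pi_inj) => j; rewrite /= permE piE.
Qed.

Lemma upairP (a b c d : 'I_n) :
  upair a b = upair c d -> (a = c /\ b = d) \/ (a = d /\ b = c).
Proof. by rewrite /upair; case: ifP => _; case: ifP => _ [-> ->]; auto. Qed.

(* The variable X_{f i, g (s i)} also occurs in the monomial of t, and not in
   row i since t i != s i, so t uses it transposed. *)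
Lemma bij_monomial_eq_transposed r (f g : 'I_r -> 'I_n) (s t : 'S_r) i :
  injective f -> injective g -> bij_monomial f g s = bij_monomial f g t ->
  s i != t i -> exists2 i', f i' = g (s i) & g (t i') = f i.
Proof.
move=> f_inj g_inj /ffunP /(_ (upair (f i) (g (s i)))); rewrite !ffunE => eq_mon ne.
have : (0 < #|[set j | upair (f j) (g (t j)) == upair (f i) (g (s i))]|)%N.
  by rewrite -eq_mon; apply/card_gt0P; exists i; rewrite inE.
case/card_gt0P => i'; rewrite inE => /eqP /upairP [[/f_inj eq_i' /eqP]|[]].
  by rewrite eq_i' (inj_eq g_inj) eq_sym (negbTE ne).
by exists i'.
Qed.

Lemma ord3_cover (x y z j : 'I_3) :
  x != y -> x != z -> y != z -> j \in [:: x; y; z].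
Proof.
by case: x => [[|[|[|?]]] ?] //; case: y => [[|[|[|?]]] ?] //;
   case: z => [[|[|[|?]]] ?] //; case: j => [[|[|[|?]]] ?].
Qed.

Lemma bij_monomial_eq_codom3 (f g : 'I_3 -> 'I_n) (s t : 'S_3) :
  injective f -> injective g -> s != t ->
  bij_monomial f g s = bij_monomial f g t -> forall j, g j \in codom f.
Proof.
move=> f_inj g_inj neq_st eq_mon j.
have [i ne] : exists i, s i != t i.
  apply/existsP; apply: contraR neq_st; rewrite negb_exists => /forallP st_eq.
  by apply/eqP/permP => x; apply/eqP; rewrite -[_ == _]negbK.
have [i1 fi1 gi1] := bij_monomial_eq_transposed f_inj g_inj eq_mon ne.
have [i2 fi2 _] :=
  bij_monomial_eq_transposed f_inj g_inj (esym eq_mon) (contra_neq esym ne).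
have ne1 : t i1 != s i.
  apply: contra_neq ne => eq1; move: gi1; rewrite eq1 -fi1 => /f_inj eq_i.
  by rewrite -eq1 eq_i.
have ne2 : t i1 != t i.
  apply: contra_neq ne => /perm_inj eq_i; move: fi1 gi1; rewrite eq_i => ->.
  by move/g_inj.
move: (ord3_cover j ne1 ne2 ne); rewrite !inE => /or3P[] /eqP ->.
- by rewrite gi1 codom_f.
- by rewrite -fi1 codom_f.
- by rewrite -fi2 codom_f.
Qed.

Lemma sym_nonsingular3_principal (f g : 'I_3 -> 'I_n) :
  injective f -> injective g ->
  trop_singular A f g -> ~~ sym_trop_singular A f g ->
  ~~ sym_trop_singular A f f.
Proof.
move=> f_inj g_inj /existsP[s /existsP[t /and3P[neq_st min_s min_t]]] nsing.
have eq_mon := sym_nonsingular_monomial_eq nsing min_s min_t.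
have [P gE] := reindex_columns_of_rows f_inj g_inj
  (bij_monomial_eq_codom3 f_inj g_inj neq_st eq_mon).
by rewrite -(sym_trop_singular_reindex f gE).
Qed.

End Submatrices.

Section LeftBlock.
Variables (k m : nat).

Definition sum_perm_fun (s : 'S_k) (u : 'I_k + 'I_m) : 'I_k + 'I_m :=
  if u is inl j then inl (s j) else u.

Lemma sum_perm_fun_inj s : injective (sum_perm_fun s).
Proof. by case=> [a|a] [b|b] //= [/perm_inj ->]. Qed.

Definition lshift_perm (s : 'S_k) : 'S_(k + m) :=
  perm (inj_comp (can_inj unsplitK)
                 (inj_comp (@sum_perm_fun_inj s) (can_inj splitK))).

Lemma lshift_permE s j : lshift_perm s (lshift m j) = lshift m (s j).
Proof. by rewrite permE /= (unsplitK (inl _ j)). Qed.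

Lemma lshift_perm_rshift s j : lshift_perm s (rshift k j) = rshift k j.
Proof. by rewrite permE /= (unsplitK (inr _ j)). Qed.

Lemma lshift_perm1 : lshift_perm 1 = 1%g.
Proof.
apply/permP => i; rewrite perm1 -(splitK i).
by case: (split i) => j; rewrite ?lshift_permE ?lshift_perm_rshift ?perm1.
Qed.

Lemma card_split_ord (P : pred 'I_(k + m)) :
  #|[set i | P i]| =
    (#|[set j : 'I_k | P (lshift m j)]| + #|[set j : 'I_m | P (rshift k j)]|)%N.
Proof.
by rewrite -!sum1_card big_split_ord; congr (_ + _)%N; apply: eq_bigl => i;
   rewrite !inE.
Qed.

End LeftBlock.

Section BlockRestriction.
Variables (R : realFieldType) (n k m : nat) (A : 'M[R]_n).
Variables (f g : 'I_(k + m) -> 'I_n) (rho : 'S_(k + m)).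

Definition block_rows : {ffun 'I_k -> 'I_n} := [ffun j => f (lshift m j)].
Definition block_cols : {ffun 'I_k -> 'I_n} := [ffun j => g (rho (lshift m j))].

Lemma bij_val_lshift_perm s :
  bij_val A f g (lshift_perm m s * rho) =
    bij_val A block_rows block_cols s
    + \sum_(j < m) A (f (rshift k j)) (g (rho (rshift k j))).
Proof.
rewrite /bij_val big_split_ord; congr (_ + _); apply: eq_bigr => j _.
  by rewrite permM lshift_permE !ffunE.
by rewrite permM lshift_perm_rshift.
Qed.

Lemma bij_monomial_lshift_perm s p :
  bij_monomial f g (lshift_perm m s * rho) p =
    (bij_monomial block_rows block_cols s p
     + #|[set j : 'I_m | upair (f (rshift k j)) (g (rho (rshift k j))) == p]|)%N.
Proof.
rewrite !ffunE card_split_ord; congr (_ + _)%N; apply: eq_card => j;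
by rewrite !inE permM ?lshift_permE ?lshift_perm_rshift ?ffunE.
Qed.

Hypothesis rho_min : bij_is_min A f g rho.

Lemma bij_is_min_lshift_perm s :
  bij_is_min A block_rows block_cols s ->
  bij_is_min A f g (lshift_perm m s * rho).
Proof.
move=> /forallP s_min; apply/forallP => t; apply: le_trans (forallP rho_min t).
have rhoE : rho = (lshift_perm m 1 * rho)%g by rewrite lshift_perm1 mul1g.
by rewrite [in X in (_ <= X)]rhoE !bij_val_lshift_perm lerD2r.
Qed.

Lemma sym_nonsingular_block :
  ~~ sym_trop_singular A f g -> ~~ sym_trop_singular A block_rows block_cols.
Proof.
move=> nsing; apply/existsP => -[s1 /existsP[s2 /and3P[neq min1 min2]]].
move/negP: neq; apply; apply/eqP/ffunP => p.
have /ffunP/(_ p) := sym_nonsingular_monomial_eq nsing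
  (bij_is_min_lshift_perm min1) (bij_is_min_lshift_perm min2).
by rewrite !bij_monomial_lshift_perm => /addIn.
Qed.

End BlockRestriction.

Lemma sym_nonsingular_principal3 (R : realFieldType) (n m : nat) (A : 'M[R]_n)
    (f g : 'I_(3 + m) -> 'I_n) :
  injective f -> injective g -> ~~ sym_trop_singular A f g ->
  ~~ has_nonsingular A 3 ->
  exists f3 : {ffun 'I_3 -> 'I_n}, injectiveb f3 && ~~ sym_trop_singular A f3 f3.
Proof.
move=> f_inj g_inj nsing no_nonsing3.
have [rho rho_min] := bij_is_min_exists A f g.
have rows_inj : injective (block_rows f).
  by move=> x y; rewrite !ffunE => /f_inj /lshift_inj.
have cols_inj : injective (block_cols g rho).
  by move=> x y; rewrite !ffunE => /g_inj /perm_inj /lshift_inj.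
have sing : trop_singular A (block_rows f) (block_cols g rho).
  apply: contraNT no_nonsing3 => nsing3; apply/existsP; exists (block_rows f).
  apply/existsP; exists (block_cols g rho).
  by rewrite nsing3 andbT; apply/andP; split; apply/injectiveP.
exists (block_rows f); rewrite (introT (injectiveP _) rows_inj) /=.
exact: sym_nonsingular3_principal rows_inj cols_inj sing
  (sym_nonsingular_block rho_min nsing).
Qed.

Theorem proposition3 (R : realFieldType) (n : nat) (A : 'M[R]_n) :
  A^T = A -> trop_rank A = 2%N ->
  ((2 < sym_trop_rank A)%N <->
   exists f : {ffun 'I_3 -> 'I_n},
     injectiveb f && ~~ sym_trop_singular A f f).
Proof.
move=> _ rank2; split.
- case/sym_trop_rank_gtnP => r + lt2r.
  have [m ->] : exists m, r = (3 + m)%N by exists (r - 3)%N; rewrite subnKC.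
  case/existsP => f /existsP[g /and3P[/injectiveP f_inj /injectiveP g_inj nsing]].
  apply: sym_nonsingular_principal3 f_inj g_inj nsing _.
  by apply/negP => /has_nonsingular_leq_trop_rank; rewrite rank2.
- case=> f /andP[f_inj nsing]; apply: has_sym_nonsingular_leq_sym_trop_rank.
  by apply/existsP; exists f; apply/existsP; exists f; rewrite f_inj nsing.
Qed.
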